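(* Let $\pi:\mathfrak H\to\mathfrak H/\mathcal I\cong\Lambda$ be the augmentation. Then $\pi(\mathrm{Fitt}_{\mathfrak H}(\mathcal I))=\mathrm{Fitt}_\Lambda(I/I^2)\subseteq(\xi)$ as ideals of $\Lambda$.
   Context: Fix a prime $p\ge5$, an integer $N\ge1$ with $p\nmid N\varphi(N)$, $\omega$ the Teichmüller character, $\theta$ an even character of $(\mathbb Z/Np\mathbb Z)^\times$ with $\chi=\omega^{-1}\theta$, satisfying: (a) $\theta$ primitive of modulus $Np$; (b) if $\chi|_{(\mathbb Z/p)^\times}=1$ then $\chi|_{(\mathbb Z/N)^\times}(p)\ne1$; (c) if $N=1$ then $\theta\ne\omega^2$. $\Lambda=\mathbb Z_p[[\mathbb Z_{p,N}^\times]]_\theta$ with $\mathbb Z_{p,N}=\varprojlim\mathbb Z/Np^r$ (the component on which $(\mathbb Z/Np\mathbb Z)^\times$ acts via $\theta$). $X=\varprojlim_r\mathrm{Cl}(\mathbb Q(\zeta_{Np^r}))[p^\infty]$ as a module over $\mathbb Z_p[[\mathbb Z_{p,N}^\times]]\cong\mathbb Z_p[[\mathrm{Gal}(\mathbb Q(\zeta_{Np^\infty})/\mathbb Q)]]$; $X_\chi(1)$ is its $\chi$-eigenspace with $\gamma$ acting as $\kappa(\gamma)\gamma$ ($\kappa$ the cyclotomic character), a torsion $\Lambda$-module, and $\xi=\xi_\chi\in\Lambda$ generates its characteristic ideal. Hecke setup: $\mathfrak H$ (resp. $\mathfrak h$) is the localization at the Eisenstein maximal ideal of Hida's ordinary Hecke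 algebra acting on $\varprojlim_rH^1(Y_1(Np^r),\mathbb Z_p)^{\mathrm{ord}}_\theta$ (resp. $\varprojlim_rH^1(X_1(Np^r),\mathbb Z_p)^{\mathrm{ord}}_\theta$), where the subscript $\theta$ is the eigenspace for the diamond operators; $\mathcal I\subset\mathfrak H$ is the Eisenstein ideal and $I\subset\mathfrak h$ its image. Known facts used as standing input: $\mathfrak H,\mathfrak h$ are finite flat $\Lambda$-algebras; $\mathfrak H/\mathcal I\cong\Lambda$; $\mathfrak h/I\cong\Lambda/\xi$; the natural map $\mathcal I\to I$ is an isomorphism of $\mathfrak H$-modules; $I$ is a faithful $\mathfrak h$-module. $\mathrm{Fitt}$ denotes the (zeroth) Fitting ideal. *)

From mathcomp Require Import all_boot all_algebra.
Set Implicit Arguments. Unset Strict Implicit. Unset Printing Implicit Defensive.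
Import GRing.Theory.
Local Open Scope ring_scope.

(* g : 'I_n -> S is a generating family of the R-module A/B, where
   A ⊇ B are R-submodules of S and R acts on S through f : R -> S
   (i.e. r . s = f r * s). *)
Definition is_gen_family (R S : comRingType) (f : R -> S) (A B : S -> Prop)
    (n : nat) (g : 'I_n -> S) : Prop :=
  (forall i, A (g i)) /\
  (forall a, A a -> exists r : 'I_n -> R, B (a - \sum_(i < n) f (r i) * g i)).

Definition is_relation (R S : comRingType) (f : R -> S) (B : S -> Prop)
    (n : nat) (g : 'I_n -> S) (r : 'I_n -> R) : Prop :=
  B (\sum_(i < n) f (r i) * g i).

(* Zeroth Fitting ideal of the (finitely generated) R-module A/B:
   the ideal of R generated by the determinants of n x n matrices whose
   rows are relations among n generators.  (Independent of the chosen
   generating family; we take the union over all of them.) *)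
Definition Fitt (R S : comRingType) (f : R -> S) (A B : S -> Prop) : R -> Prop :=
  fun x => exists (n : nat) (g : 'I_n -> S), is_gen_family f A B g /\
    exists (m : nat) (c : 'I_m -> R) (M : 'I_m -> 'M[R]_n),
      (forall k i, is_relation f B g (fun j => M k i j)) /\
      x = \sum_(k < m) c k * \det (M k).

Definition ideal_prod (S : comRingType) (A B : S -> Prop) : S -> Prop :=
  fun y => exists (m : nat) (a b : 'I_m -> S),
    (forall k, A (a k) /\ B (b k)) /\ y = \sum_(k < m) a k * b k.

Definition zero_set (S : comRingType) : S -> Prop := fun y => y = 0.

(* Since cI ~ I as H-modules, I/I^2 is cI/cI^2 = cI (x)_H Lambda, and Fitting
   ideals commute with base change.  Concretely, reducing a presentation of cI
   modulo cI gives one of I/I^2 over Lambda; conversely, lifting a presentation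
   of I/I^2 and adjoining a generating family e of cI, whose elements are
   congruent modulo cI^2 to combinations of the lifted generators, yields a
   presentation of cI by a block matrix which is triangular modulo cI with the
   original relation matrix and an identity block on the diagonal.
   For the inclusion in (xi): the determinant of a relation matrix of cI
   annihilates cI (adjugate trick), so its image annihilates the faithful module
   I and vanishes; hence each lifted determinant maps into I, i.e. lies in (xi)
   because h/I = Lambda/(xi). *)
From mathcomp Require Import all_boot all_algebra.
Set Implicit Arguments. Unset Strict Implicit. Unset Printing Implicit Defensive.
Import GRing.Theory.
Local Open Scope ring_scope.

Lemma ideal_prod_sum (S : comNzRingType) (A B : S -> Prop) n (a b : 'I_n -> S) :
  (forall i, A (a i)) -> (forall i, B (b i)) -> ideal_prod A B (\sum_i a i * b i).
Proof. by move=> Aa Bb; exists n, a, b. Qed.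

Lemma gen_family_decomp (S : comNzRingType) (A : S -> Prop) n (e : 'I_n -> S) a :
  is_gen_family (fun x => x) A (@zero_set S) e -> A a ->
  exists r : 'I_n -> S, a = \sum_i r i * e i.
Proof. by move=> [_ gen_e] /gen_e[r /eqP]; rewrite subr_eq0 => /eqP; exists r. Qed.

Lemma gen_family_col_mx (S : comNzRingType) (A : S -> Prop) n m
    (g : 'I_n -> S) (e : 'I_m -> S) :
  (forall i, A (g i)) -> is_gen_family (fun x => x) A (@zero_set S) e ->
  is_gen_family (fun x => x) A (@zero_set S)
    (fun k => col_mx (\col_i g i) (\col_j e j) k ord0).
Proof.
move=> Ag [Ae gen_e]; split.
  by move=> k; rewrite -[k]splitK; case: (split k) => i /=;
    rewrite ?col_mxEu ?col_mxEd mxE.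
move=> a /gen_e[r ar]; exists (fun k => col_mx 0 (\col_j r j) k ord0).
rewrite big_split_ord /= big1 ?add0r; last by move=> i _; rewrite !col_mxEu !mxE mul0r.
by under eq_bigr => j _ do rewrite !col_mxEd !mxE.
Qed.

Lemma mulmx_col_entry (S : pzSemiRingType) k n (M : 'M[S]_(k, n)) (v : 'I_n -> S) i :
  (M *m \col_j v j) i ord0 = \sum_j M i j * v j.
Proof. by rewrite mxE; apply: eq_bigr => j _; rewrite mxE. Qed.

Lemma mulmx_col_eq0P (S : comNzRingType) k n (M : 'M[S]_(k, n)) (v : 'I_n -> S) :
  M *m \col_j v j = 0 <->
  forall i, is_relation (fun x => x) (@zero_set S) v (fun j => M i j).
Proof.
split=> [Mv0 i | Mrel]; first by rewrite /is_relation -mulmx_col_entry Mv0 mxE.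
by apply/matrixP => i l; rewrite ord1 mulmx_col_entry mxE; apply: Mrel.
Qed.

Lemma det_scale_col_eq0 (R : comPzRingType) n (M : 'M[R]_n) (v : 'cV[R]_n) :
  M *m v = 0 -> \det M *: v = 0.
Proof. by move=> Mv0; rewrite -mul_scalar_mx -mul_adj_mx -mulmxA Mv0 mulmx0. Qed.

Lemma block_presentation_mul_col (R : pzRingType) n m (A : 'M[R]_n)
    (T : 'M[R]_(n, m)) (S : 'M[R]_(m, n)) (U : 'M[R]_m) (u : 'cV[R]_n) (v : 'cV[R]_m) :
  A *m u = T *m v -> v = S *m u + U *m v ->
  block_mx A (- T) (- S) (1%:M - U) *m col_mx u v = 0.
Proof.
move=> Au Dv; rewrite mul_block_col -(col_mx0 _ n m 1) !mulNmx mulmxBl mul1mx Au.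
by rewrite subrr {1}Dv addrK addNr.
Qed.

Lemma det_map_block_unitriangular (R S : comPzRingType) (f : {rmorphism R -> S}) n m
    (A : 'M[R]_n) (B : 'M[R]_(n, m)) (C : 'M[R]_(m, n)) (D : 'M[R]_m) :
  map_mx f B = 0 -> map_mx f D = 1%:M ->
  f (\det (block_mx A B C D)) = \det (map_mx f A).
Proof. by move=> fB fD; rewrite -det_map_mx map_block_mx fB fD det_lblock det1 mulr1. Qed.

Section EisensteinIdeal.

Variables (Lam H h : comNzRingType) (iota : {rmorphism Lam -> H})
  (pi : {rmorphism H -> Lam}) (phi : {rmorphism H -> h}).
Hypothesis pi_iota : forall l, pi (iota l) = l.

Definition eis_ideal (x : H) : Prop := pi x = 0.
Definition eis_image (y : h) : Prop := exists x, eis_ideal x /\ phi x = y.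

Local Notation lam_act := (fun a : Lam => phi (iota a)).
Local Notation I2 := (ideal_prod eis_image eis_image).

Lemma eis_ideal_sub_iota_pi x : eis_ideal (x - iota (pi x)).
Proof. by rewrite /eis_ideal rmorphB pi_iota subrr. Qed.

Lemma eis_ideal_suml n (a b : 'I_n -> H) :
  (forall i, eis_ideal (a i)) -> eis_ideal (\sum_i a i * b i).
Proof.
by move=> Ia; rewrite /eis_ideal rmorph_sum big1 // => i _; rewrite rmorphM Ia mul0r.
Qed.

Lemma eis_ideal_sumr n (a b : 'I_n -> H) :
  (forall i, eis_ideal (b i)) -> eis_ideal (\sum_i a i * b i).
Proof.
by move=> Ib; rewrite /eis_ideal rmorph_sum big1 // => i _; rewrite rmorphM Ib mulr0.
Qed.

Lemma eis_image_sq_sum n (a g : 'I_n -> H) :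
  (forall i, eis_ideal (a i)) -> (forall i, eis_ideal (g i)) ->
  I2 (\sum_i phi (a i) * phi (g i)).
Proof.
by move=> Ia Ig; apply: ideal_prod_sum => i; [exists (a i) | exists (g i)].
Qed.

Lemma gen_family_eis_image n (g : 'I_n -> H) :
  is_gen_family (fun x => x) eis_ideal (@zero_set H) g ->
  is_gen_family lam_act eis_image I2 (fun i => phi (g i)).
Proof.
move=> gen_g; split=> [i | _ [x [Ix <-]]]; first by exists (g i); split => //; case: gen_g.
have [s ->] := gen_family_decomp gen_g Ix; exists (fun i => pi (s i)).
have -> : phi (\sum_i s i * g i) - \sum_i phi (iota (pi (s i))) * phi (g i)
        = \sum_i phi (s i - iota (pi (s i))) * phi (g i).
  by rewrite rmorph_sum -sumrB; apply: eq_bigr => i _; rewrite rmorphM rmorphB mulrBl.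
by apply: eis_image_sq_sum => i; [exact: eis_ideal_sub_iota_pi | case: gen_g].
Qed.

Lemma relation_eis_image n (g r : 'I_n -> H) :
  (forall i, eis_ideal (g i)) -> is_relation (fun x => x) (@zero_set H) g r ->
  is_relation lam_act I2 (fun i => phi (g i)) (fun i => pi (r i)).
Proof.
rewrite /is_relation => Ig rel_r.
have -> : \sum_j phi (iota (pi (r j))) * phi (g j)
        = \sum_j phi (iota (pi (r j)) - r j) * phi (g j) + phi (\sum_j r j * g j).
  rewrite rmorph_sum -big_split; apply: eq_bigr => j _.
  by rewrite rmorphB !rmorphM mulrBl /= subrK.
rewrite rel_r rmorph0 addr0; apply: eis_image_sq_sum => // j.
by rewrite -opprB /eis_ideal rmorphN eis_ideal_sub_iota_pi oppr0.
Qed.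

Lemma Fitt_eis_image x :
  Fitt (fun x => x) eis_ideal (@zero_set H) x -> Fitt lam_act eis_image I2 (pi x).
Proof.
move=> [n [g [gen_g [k [c [M [rel_M ->]]]]]]].
exists n, (fun i => phi (g i)); split; first exact: gen_family_eis_image.
exists k, (fun l => pi (c l)), (fun l => map_mx pi (M l)); split.
  move=> l i; rewrite /is_relation; under eq_bigr => j _ do rewrite mxE.
  by apply: relation_eis_image => //; case: gen_g.
by rewrite rmorph_sum; apply: eq_bigr => l _; rewrite rmorphM det_map_mx.
Qed.

Lemma eis_ideal_prod_span (A : H -> Prop) k (f : 'I_k -> H) x :
  is_gen_family (fun x => x) A (@zero_set H) f -> ideal_prod eis_ideal A x ->
  exists t : 'I_k -> H, (forall j, eis_ideal (t j)) /\ x = \sum_j t j * f j.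
Proof.
move=> gen_f [K [a [b [ab ->]]]].
have /fin_all_exists[s Db] l := gen_family_decomp gen_f (ab l).2.
exists (fun j => \sum_l a l * s l j); split.
  by move=> j; apply: eis_ideal_suml => l; case: (ab l).
under eq_bigr => l _ do rewrite Db big_distrr.
rewrite exchange_big /=; apply: eq_bigr => j _.
by rewrite mulr_suml; apply: eq_bigr => l _; rewrite mulrA.
Qed.

Variables (m : nat) (e : 'I_m -> H).
Hypothesis gen_e : is_gen_family (fun x => x) eis_ideal (@zero_set H) e.
Hypothesis phi_inj_eis : forall x, eis_ideal x -> phi x = 0 -> x = 0.

Lemma eis_ideal_prod_of_image x :
  eis_ideal x -> I2 (phi x) -> ideal_prod eis_ideal eis_ideal x.
Proof.
move=> Ix [K [a [b [ab Dx]]]].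
have /fin_all_exists[a' Da'] l := (ab l).1.
have /fin_all_exists[b' Db'] l := (ab l).2.
exists K, a', b'; split; first by move=> l; split; [case: (Da' l) | case: (Db' l)].
apply/eqP; rewrite -subr_eq0; apply/eqP/phi_inj_eis.
  by rewrite /eis_ideal rmorphB Ix (eis_ideal_suml _ (fun l => (Da' l).1)) subr0.
rewrite rmorphB rmorph_sum Dx; apply/eqP; rewrite subr_eq0; apply/eqP.
by apply: eq_bigr => l _; rewrite rmorphM (Da' l).2 (Db' l).2.
Qed.

Lemma eis_ideal_span_of_sq_image x : eis_ideal x -> I2 (phi x) ->
  exists t : 'I_m -> H, (forall j, eis_ideal (t j)) /\ x = \sum_j t j * e j.
Proof.
by move=> Ix /(eis_ideal_prod_of_image Ix); apply: eis_ideal_prod_span gen_e.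
Qed.

Section LiftPresentation.

Variables (n : nat) (g' : 'I_n -> h) (g : 'I_n -> H).
Hypothesis g_lift : forall i, eis_ideal (g i) /\ phi (g i) = g' i.

Lemma lift_relation_rows (N : 'M[Lam]_n) :
  (forall i, is_relation lam_act I2 g' (fun j => N i j)) ->
  exists T : 'M[H]_(n, m), map_mx pi T = 0 /\
    map_mx iota N *m \col_i g i = T *m \col_j e j.
Proof.
move=> rel_N.
have /fin_all_exists[t Dt] i : exists t : 'I_m -> H, (forall k, eis_ideal (t k)) /\
    \sum_j iota (N i j) * g j = \sum_k t k * e k.
  apply: eis_ideal_span_of_sq_image; first by apply: eis_ideal_sumr => j; case: (g_lift j).
  rewrite rmorph_sum; under eq_bigr => j _ do rewrite rmorphM (g_lift j).2.
  exact: rel_N.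
exists (\matrix_(i, k) t i k); split; first by apply/matrixP => i k; rewrite !mxE (Dt i).1.
apply/matrixP => i l; rewrite ord1 !mulmx_col_entry.
under eq_bigr => j _ do rewrite mxE; under [RHS]eq_bigr => k _ do rewrite mxE.
exact: (Dt i).2.
Qed.

Hypothesis gen_g' : is_gen_family lam_act eis_image I2 g'.

Lemma lift_generators :
  exists (R : 'M[Lam]_(m, n)) (T : 'M[H]_m), map_mx pi T = 0 /\
    \col_j e j = map_mx iota R *m \col_i g i + T *m \col_j e j.
Proof.
have /fin_all_exists[p Dp] j : exists p : ('I_n -> Lam) * ('I_m -> H),
    (forall k, eis_ideal (p.2 k)) /\ e j - \sum_i iota (p.1 i) * g i = \sum_k p.2 k * e k.
  have [Ie _] := gen_e.
  have [r rel_r] := gen_g'.2 (phi (e j)) (ex_intro _ (e j) (conj (Ie j) erefl)).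
  have Ix : eis_ideal (e j - \sum_i iota (r i) * g i).
    by rewrite /eis_ideal rmorphB Ie (eis_ideal_sumr _ (fun i => (g_lift i).1)) subr0.
  have I2x : I2 (phi (e j - \sum_i iota (r i) * g i)).
    rewrite rmorphB rmorph_sum; under eq_bigr => i _ do rewrite rmorphM (g_lift i).2.
    exact: rel_r.
  by have [t Dt] := eis_ideal_span_of_sq_image Ix I2x; exists (r, t).
exists (\matrix_(j, i) (p j).1 i), (\matrix_(j, k) (p j).2 k); split.
  by apply/matrixP => j k; rewrite !mxE (Dp j).1.
apply/matrixP => j l; rewrite ord1 [RHS]mxE !mulmx_col_entry mxE.
under eq_bigr => i _ do rewrite !mxE; under [X in _ = _ + X]eq_bigr => k _ do rewrite mxE.
by rewrite -(Dp j).2 addrC subrK.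
Qed.

End LiftPresentation.

Lemma map_mx_pi_iota k l (N : 'M[Lam]_(k, l)) : map_mx pi (map_mx iota N) = N.
Proof. by apply/matrixP => i j; rewrite !mxE pi_iota. Qed.

Lemma lift_presentation n (g' : 'I_n -> h) :
  is_gen_family lam_act eis_image I2 g' ->
  exists G : 'I_(n + m) -> H, is_gen_family (fun x => x) eis_ideal (@zero_set H) G /\
    forall N : 'M[Lam]_n, (forall i, is_relation lam_act I2 g' (fun j => N i j)) ->
    exists M : 'M[H]_(n + m),
      (forall i, is_relation (fun x => x) (@zero_set H) G (fun j => M i j)) /\
      pi (\det M) = \det N.
Proof.
move=> gen_g'; have /fin_all_exists[g g_lift] := gen_g'.1.
have [R [T2 [piT2 De]]] := lift_generators g_lift gen_g'.
pose G k := col_mx (\col_i g i) (\col_j e j) k ord0.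
have DG : \col_k G k = col_mx (\col_i g i) (\col_j e j).
  by apply/matrixP => k l; rewrite ord1 mxE.
exists G; split; first by apply: gen_family_col_mx gen_e => i; case: (g_lift i).
move=> N rel_N; have [T1 [piT1 DN]] := lift_relation_rows g_lift rel_N.
exists (block_mx (map_mx iota N) (- T1) (- map_mx iota R) (1%:M - T2)); split.
  by apply/mulmx_col_eq0P; rewrite DG; apply: block_presentation_mul_col.
rewrite det_map_block_unitriangular ?map_mx_pi_iota // ?map_mxN ?piT1 ?oppr0 //.
by rewrite map_mxB piT2 subr0 map_scalar_mx rmorph1.
Qed.

Hypothesis faithful_image : forall y, (forall z, eis_image z -> y * z = 0) -> y = 0.

Lemma phi_det_relations_eq0 k (G : 'I_k -> H) (M : 'M[H]_k) :
  is_gen_family (fun x => x) eis_ideal (@zero_set H) G ->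
  (forall i, is_relation (fun x => x) (@zero_set H) G (fun j => M i j)) ->
  phi (\det M) = 0.
Proof.
move=> gen_G /mulmx_col_eq0P /det_scale_col_eq0 /matrixP detMG.
have detMG0 j : \det M * G j = 0 by have := detMG j ord0; rewrite !mxE.
apply: faithful_image => _ [x [Ix <-]]; have [r ->] := gen_family_decomp gen_G Ix.
rewrite -rmorphM mulr_sumr big1 ?rmorph0 // => i _.
by rewrite mulrCA detMG0 mulr0.
Qed.

Lemma Fitt_eis_image_lift l : Fitt lam_act eis_image I2 l ->
  exists x, Fitt (fun x => x) eis_ideal (@zero_set H) x /\ pi x = l.
Proof.
move=> [n [g' [gen_g' [k [c [N [rel_N ->]]]]]]].
have [G [gen_G liftG]] := lift_presentation gen_g'.
have /fin_all_exists[M DM] r := liftG (N r) (rel_N r).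
exists (\sum_r iota (c r) * \det (M r)); split.
  by exists (n + m), G; split => //; exists k, (fun r => iota (c r)), M; split => // r i;
    exact: (DM r).1.
by rewrite rmorph_sum; apply: eq_bigr => r _; rewrite rmorphM pi_iota (DM r).2.
Qed.

Lemma Fitt_eis_image_dvd (xi : Lam) l :
  (forall a, eis_image (lam_act a) -> exists c, a = xi * c) ->
  Fitt lam_act eis_image I2 l -> exists c, l = xi * c.
Proof.
move=> xi_image [n [g' [gen_g' [k [c [N [rel_N ->]]]]]]].
have [G [gen_G liftG]] := lift_presentation gen_g'.
have /fin_all_exists[w Dw] r : exists w, \det (N r) = xi * w.
  have [M [rel_M piM]] := liftG (N r) (rel_N r).
  apply: xi_image; exists (iota (\det (N r)) - \det M); split.
    by rewrite /eis_ideal rmorphB pi_iota piM subrr.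
  by rewrite rmorphB (phi_det_relations_eq0 gen_G rel_M) subr0.
exists (\sum_r c r * w r); rewrite mulr_sumr; apply: eq_bigr => r _.
by rewrite Dw mulrCA.
Qed.

End EisensteinIdeal.

Theorem mainTheorem6 (Lam H h : comRingType) (xi : Lam)
    (iota : {rmorphism Lam -> H})
    (pi : {rmorphism H -> Lam})
    (phi : {rmorphism H -> h}) :
  (forall l, pi (iota l) = l) ->
  (forall y : h, exists x : H, phi x = y) ->
  let cI : H -> Prop := fun x => pi x = 0 in
  let I : h -> Prop := fun y => exists x, cI x /\ phi x = y in
  (forall x, cI x -> phi x = 0 -> x = 0) ->
  (forall l : Lam, I (phi (iota l)) <-> exists c, l = xi * c) ->
  (forall y : h, (forall z, I z -> y * z = 0) -> y = 0) ->
  (exists (n : nat) (g : 'I_n -> H), is_gen_family (fun x : H => x) cI (@zero_set H) g) ->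
  (forall l : Lam,
     (exists x, Fitt (fun x : H => x) cI (@zero_set H) x /\ pi x = l) <->
     Fitt (fun a : Lam => phi (iota a)) I (ideal_prod I I) l) /\
  (forall l : Lam, Fitt (fun a : Lam => phi (iota a)) I (ideal_prod I I) l ->
     exists c, l = xi * c).
Proof.
move=> pi_iota _ cI I phi_inj xi_image faithful [m [e gen_e]]; split=> l.
  split=> [[x [Fx <-]] | ]; first exact: Fitt_eis_image.
  exact: (Fitt_eis_image_lift pi_iota gen_e phi_inj).
exact: (Fitt_eis_image_dvd pi_iota gen_e phi_inj faithful (fun a => (xi_image a).1)).
Qed.
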